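(* For a group $G$, the following are equivalent: (A) $G = S(G)$; (B) every subgroup of finite index of $G$ is exponential in $G$; (C) every finite quotient of $G$ is nilpotent; (D) every subgroup of finite index of $G$ is subnormal in $G$.
   Context: $S(G) := \{ x \in G : x^{|G:H|} \in H \text{ for every subgroup } H \leqslant G \text{ of finite index}\}$. A subgroup $H$ of finite index in $G$ is exponential in $G$ if $x^{|G:H|} \in H$ for every $x \in G$. $H$ is subnormal in $G$ if there is a finite chain $H = H_0 \lhd H_1 \lhd \dots \lhd H_r = G$. *)

From HB Require Import structures.
From mathcomp Require Import all_boot all_fingroup all_solvable.
Set Implicit Arguments. Unset Strict Implicit. Unset Printing Implicit Defensive.

Local Open Scope group_scope.

Section Defs.
Variable G : groupType.

Definition is_subgroup (H : G -> Prop) : Prop :=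
  H 1 /\ (forall x y, H x -> H y -> H (x * y)) /\ (forall x, H x -> H x^-1).

(* |G : H| = n : there are exactly n left cosets r H, i.e. a family of
   representatives r_0..r_{n-1} such that each x lies in exactly one r_i H. *)
Definition has_index (H : G -> Prop) (n : nat) : Prop :=
  exists reps : n.-tuple G, forall x : G, exists! i : 'I_n, H ((tnth reps i)^-1 * x).

Definition finite_index (H : G -> Prop) : Prop :=
  is_subgroup H /\ exists n, has_index H n.

Definition in_S (x : G) : Prop :=
  forall (H : G -> Prop) (n : nat), is_subgroup H -> has_index H n -> H (x ^+ n).

Definition exponential (H : G -> Prop) : Prop :=
  finite_index H /\ forall n, has_index H n -> forall x : G, H (x ^+ n).

Definition normal_in (H K : G -> Prop) : Prop :=
  is_subgroup H /\ is_subgroup K /\ (forall x, H x -> K x) /\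
  (forall x y, H x -> K y -> H (x ^ y)).

Inductive subnormal_in (H : G -> Prop) : Prop :=
  | subnormal_top : is_subgroup H -> (forall x, H x) -> subnormal_in H
  | subnormal_step (K : G -> Prop) : normal_in H K -> subnormal_in K -> subnormal_in H.

End Defs.

From HB Require Import structures.
From mathcomp Require Import all_boot all_fingroup all_solvable.
From mathcomp Require Import boolp.

(* Everything is transported to the finite quotients of G.  A subgroup of
   index n is the preimage of a point stabiliser under the action of G on its
   n left cosets, and the image of that action is a finite quotient Q; for a
   preimage of K <= Q, being exponential (resp. subnormal) in G is equivalent
   to x^|Q:K| in K for all x (resp. K subnormal in Q).  In a finite group,
   subgroups of a nilpotent group are subnormal, and x^|G:K| lies in any
   subnormal K (descend along the series, using x^|G:M| in M for M normal,
   which holds in G/M).  Conversely, if every subgroup is exponential then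
   every Sylow subgroup is normal, so the group is nilpotent. *)

Local Open Scope group_scope.

Section FiniteExponential.
Variable gT : finGroupType.
Implicit Types G K M P : {group gT}.

Definition exponential_subgroups G :=
  forall K, K \subset G -> {in G, forall x, x ^+ #|G : K| \in K}.

Lemma expg_index_normal M G x : M <| G -> x \in G -> x ^+ #|G : M| \in M.
Proof.
move=> nsMG Gx; have Nx : x \in 'N(M) := subsetP (normal_norm nsMG) x Gx.
apply: coset_idr; first exact: groupX.
by rewrite morphX //= -card_quotient ?normal_norm // expg_cardG ?mem_quotient.
Qed.

Lemma expg_index_subnormal K G x : K <|<| G -> x \in G -> x ^+ #|G : K| \in K.
Proof.
have [n ltGn] := ubnP #|G|; elim: n G ltGn x => // n IH G ltGn x snKG Gx.
have [-> | [M [snKM nsMG ltMG]]] := subnormalEr snKG; first by rewrite indexgg.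
rewrite -(Lagrange_index (proper_sub ltMG) (subnormal_sub snKM)) expgM.
apply: IH => //; last exact: expg_index_normal.
exact: leq_trans (proper_card ltMG) _.
Qed.

Lemma nil_exponential_subgroups G : nilpotent G -> exponential_subgroups G.
Proof. by move=> nilG K sKG x; apply/expg_index_subnormal/nilpotent_subnormal. Qed.

(* A p-element y of G is a power y = (y ^+ m) ^+ k with m = |G : N_G(P)|,
   a p'-number; so y lies in N_G(P), in which P is a normal Sylow subgroup. *)
Lemma exponential_Sylow_normal p G P :
  exponential_subgroups G -> p.-Sylow(G) P -> P <| G.
Proof.
move=> expG sylP; have sPG := pHall_sub sylP.
set N := 'N_G(P); have sNG : N \subset G := subsetIl G _.
have sPN : P \subset N by rewrite subsetI sPG normG.
have sylPN : p.-Sylow(N) P := pHall_subl sPN sNG sylP.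
have p'N : p^'.-nat #|G : N|.
  case/and3P: sylP => _ _; apply: pnat_dvd.
  by rewrite -(Lagrange_index sNG sPN) dvdn_mulr.
have peltP y : y \in G -> p.-elt y -> y \in P.
  move=> Gy py; rewrite (mem_normal_Hall sylPN (normalSG sPG)) //.
  rewrite -(expgK (pnat_coprime py p'N) (cycle_id y)) groupX //.
  exact: expG.
rewrite /normal sPG; apply/subsetP => z Gz; rewrite inE.
apply/subsetP => _ /imsetP[y Py ->]; apply: peltP.
  by rewrite groupJ // (subsetP sPG).
by rewrite p_eltJ (mem_p_elt (pHall_pgroup sylP) Py).
Qed.

Lemma exponential_subgroups_nil G : exponential_subgroups G -> nilpotent G.
Proof.
move=> expG; apply: nilpotentS (Fitting_nil G).
rewrite -{1}(Sylow_gen G) gen_subG; apply/bigcupsP => P /SylowP[p _ sylP].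
apply: Fitting_max; first exact: exponential_Sylow_normal sylP.
exact: pgroup_nil (pHall_pgroup sylP).
Qed.

End FiniteExponential.

Section Subgroups.
Context {G : groupType}.
Implicit Types (H : G -> Prop) (x y r : G).

Lemma subgroupT : is_subgroup (fun _ : G => True).
Proof. by []. Qed.

Lemma subgroup1 {H} : is_subgroup H -> H 1.
Proof. by case. Qed.

Lemma subgroupM {H x y} : is_subgroup H -> H x -> H y -> H (x * y).
Proof. by case=> _ [HM _]; apply: HM. Qed.

Lemma subgroupV {H x} : is_subgroup H -> H x -> H x^-1.
Proof. by case=> _ [_ HV]; apply: HV. Qed.

Lemma subgroup_same_coset {H} r {x y} :
  is_subgroup H -> H (r^-1 * x) -> H (r^-1 * y) -> H (x^-1 * y).
Proof.
move=> sH Hx Hy; have := subgroupM sH (subgroupV sH Hx) Hy.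
by rewrite invMg invgK -mulgA mulVKg.
Qed.

Lemma has_index_leq {H n m} :
  is_subgroup H -> has_index H n -> has_index H m -> n <= m.
Proof.
move=> sH [r r_cosets] [s s_cosets].
have /fin_all_exists[phi Hphi] :
    forall i : 'I_n, exists j : 'I_m, H ((tnth s j)^-1 * tnth r i).
  by move=> i; have [j []] := s_cosets (tnth r i); exists j.
suff /leq_card : injective phi by rewrite !card_ord.
move=> i i' phi_ii'.
have [k [_ r_uniq]] := r_cosets (tnth r i').
rewrite -(r_uniq i) ?(r_uniq i') ?mulVg //; first exact: subgroup1 sH.
apply: (subgroup_same_coset _ sH (Hphi i)); rewrite phi_ii'; exact: Hphi.
Qed.

Lemma has_index_uniq {H n m} :
  is_subgroup H -> has_index H n -> has_index H m -> n = m.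
Proof.
by move=> sH Hn Hm; apply/eqP; rewrite eqn_leq !(has_index_leq sH).
Qed.

End Subgroups.

Section MonoidMorphism.
Context {G : groupType} {Q : finGroupType} (f : G -> Q).
Hypothesis fM : monoid_morphism f.

Let fm : UMagmaMorphism.type G Q := HB.pack f (isUMagmaMorphism.Build _ _ f fM).

Lemma mmorphV x : f x^-1 = (f x)^-1. Proof. exact: (gmulfV fm). Qed.
Lemma mmorphX x n : f (x ^+ n) = f x ^+ n. Proof. exact: (gmulfXn fm). Qed.
Lemma mmorphJ x y : f (x ^ y) = f x ^ f y. Proof. exact: (gmulfJ fm). Qed.

Definition mpreim (K : {set Q}) : G -> Prop := fun x => f x \in K.

Definition mimage (P : G -> Prop) : {set Q} :=
  [set q | `[< exists2 x, P x & f x = q >]].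

Lemma mpreim_subgroup (K : {group Q}) : is_subgroup (mpreim K).
Proof.
split; first by rewrite /mpreim fM.1.
split=> [x y Kx Ky | x Kx]; first by rewrite /mpreim fM.2 groupM.
by rewrite /mpreim mmorphV groupV.
Qed.

Lemma mpreim_normal {L M : {group Q}} : L <| M -> normal_in (mpreim L) (mpreim M).
Proof.
move=> nsLM; split; first exact: mpreim_subgroup.
split; first exact: mpreim_subgroup.
split=> [x | x y Lx My]; first exact: (subsetP (normal_sub nsLM)).
by rewrite /mpreim mmorphJ memJ_norm // (subsetP (normal_norm nsLM)).
Qed.

Lemma mpreim_subnormal (L : {group Q}) :
  L <|<| [set: Q] -> subnormal_in (mpreim L).
Proof.
have [n ltLn] := ubnP (#|[set: Q]| - #|L|).
elim: n L ltLn => // n IH L ltLn snL.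
have [defL | [M [nsLM snM ltLM]]] := subnormalEl snL.
  apply: subnormal_top => [|x]; first exact: mpreim_subgroup.
  by rewrite /mpreim defL inE.
apply: (subnormal_step (mpreim_normal nsLM)); apply: IH snM.
rewrite ltnS in ltLn; apply: leq_trans ltLn; have ltLMc := proper_card ltLM.
by rewrite ltn_sub2l // (leq_trans ltLMc) ?subset_leq_card ?subsetT.
Qed.

Lemma mimage_group_set {P : G -> Prop} : is_subgroup P -> group_set (mimage P).
Proof.
move=> sP; apply/group_setP; split.
  by rewrite inE; apply/asboolP; exists 1; [exact: subgroup1 sP | exact: fM.1].
move=> p q; rewrite !inE => /asboolP[x Px <-] /asboolP[y Py <-].
by apply/asboolP; exists (x * y); [exact: subgroupM sP Px Py | exact: fM.2].
Qed.

Definition mimage_group {P : G -> Prop} (sP : is_subgroup P) : {group Q} :=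
  Group (mimage_group_set sP).

Hypothesis f_surj : forall q : Q, exists x : G, f x = q.

Lemma mimage_mpreim (K : {set Q}) : mimage (mpreim K) = K.
Proof.
apply/setP => q; rewrite inE; apply/asboolP/idP => [[x Kx <-] // | Kq].
by have [x fx] := f_surj q; exists x; rewrite /mpreim ?fx.
Qed.

Lemma mimage_subnormal {P : G -> Prop} (sP : is_subgroup P) :
  subnormal_in P -> mimage_group sP <|<| [set: Q].
Proof.
move=> snP; elim: snP sP => {P} [P _ PT | P K [_ [sK [sPK nPK]]] _ IH] sP.
  rewrite /= (_ : mimage P = [set: Q]) ?subnormal_refl //.
  by apply/setP => q; rewrite !inE; apply/asboolP; have [x <-] := f_surj q; exists x.
apply: (subnormal_trans _ (IH sK)); apply: normal_subnormal; apply/andP; split.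
  apply/subsetP => q; rewrite !inE => /asboolP[x Px <-].
  by apply/asboolP; exists x => //; apply: sPK.
apply/subsetP => r; rewrite inE => /asboolP[y Ky <-]; rewrite inE.
apply/subsetP => w /imsetP[q]; rewrite inE => /asboolP[x Px <-] ->.
by rewrite inE; apply/asboolP; exists (x ^ y); [apply: nPK | apply: mmorphJ].
Qed.

(* |Q : K| counts right cosets; the left coset (f x) K is matched with the
   right coset K (f x)^-1, whose representative r gives the coset
   representative x_r with f x_r = r^-1. *)
Lemma mpreim_has_index (K : {group Q}) : has_index (mpreim K) #|[set: Q] : K|.
Proof.
have /fin_all_exists[lift liftE] :
  forall C : {set Q}, exists x, f x = (repr C)^-1 by move=> C; apply: f_surj.
pose Cs := rcosets K [set: Q].
exists [tuple lift (enum_val (i : 'I_#|Cs|)) | i < #|[set: Q] : K|].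
move=> x.
have Cx : K :* (f x)^-1 \in Cs by apply/rcosetsP; exists (f x)^-1; rewrite ?inE.
have memE C : C \in Cs -> mpreim K ((lift C)^-1 * x) <-> C = K :* (f x)^-1.
  case/rcosetsP=> a _ ->; rewrite /mpreim fM.2 mmorphV liftE invgK.
  rewrite -[f x]invgK -mem_rcoset invgK.
  by split=> [/rcoset_eqP | <-]; rewrite ?rcoset_repr ?mem_repr_rcoset.
exists (enum_rank_in Cx (K :* (f x)^-1)).
split=> [|i]; rewrite tnth_mktuple memE ?enum_valP //; first exact: enum_rankK_in.
by move=> def_i; apply: enum_val_inj; rewrite def_i enum_rankK_in.
Qed.

Lemma mpreim_finite_index (K : {group Q}) : finite_index (mpreim K).
Proof.
by split; [apply: mpreim_subgroup | exists #|[set: Q] : K|; apply: mpreim_has_index].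
Qed.

Lemma mpreim_exponentialE (K : {group Q}) :
  exponential (mpreim K) <-> forall q, q ^+ #|[set: Q] : K| \in K.
Proof.
have [sK iK] := (mpreim_subgroup K, mpreim_has_index K).
split=> [[_ expK] q | expQ].
  by have [x <-] := f_surj q; rewrite -mmorphX; apply: expK iK x.
split=> [|n iKn x]; first by split; last exists #|[set: Q] : K|.
by rewrite (has_index_uniq sK iKn iK) /mpreim mmorphX.
Qed.

Lemma mpreim_subnormalE (K : {group Q}) :
  subnormal_in (mpreim K) <-> K <|<| [set: Q].
Proof.
split=> [snK | ]; last exact: mpreim_subnormal.
by have := mimage_subnormal (mpreim_subgroup K) snK; rewrite /= mimage_mpreim.
Qed.

End MonoidMorphism.

Section Corestriction.
Context {G : groupType} {Q : finGroupType} {f : G -> Q}.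
Hypothesis fM : monoid_morphism f.

Let imf := mimage_group f fM (@subgroupT G).

Definition corestr x : subg_of imf := subg imf (f x).

Lemma corestrK x : sgval (corestr x) = f x.
Proof. by rewrite subgK // inE; apply/asboolP; exists x. Qed.

Lemma corestr_morphism : monoid_morphism corestr.
Proof. by split=> [|x y]; apply: subg_inj; rewrite /= !corestrK ?fM.1 ?fM.2. Qed.

Lemma corestr_surj u : exists x, corestr x = u.
Proof.
have := subgP u; rewrite inE => /asboolP[x _ fx].
by exists x; apply: subg_inj; rewrite corestrK.
Qed.

Lemma mpreim_corestr (K : {set Q}) : mpreim corestr (sgval @*^-1 K) = mpreim f K.
Proof. by apply: funext => x; rewrite /mpreim !inE /= corestrK. Qed.

End Corestriction.

Section CosetAction.
Context {G : groupType} {H : G -> Prop} {n : nat} {reps : n.-tuple G}.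
Hypotheses (sH : is_subgroup H)
  (reps_cosets : forall x, exists! i : 'I_n, H ((tnth reps i)^-1 * x)).

Definition coset_index x : 'I_n := sval (cid (reps_cosets x)).

Lemma coset_indexP x : H ((tnth reps (coset_index x))^-1 * x).
Proof. exact: (svalP (cid (reps_cosets x))).1. Qed.

Lemma coset_index_eq x i : H ((tnth reps i)^-1 * x) -> coset_index x = i.
Proof. exact: (svalP (cid (reps_cosets x))).2. Qed.

Definition coset_act g i := coset_index (g^-1 * tnth reps i).

Lemma coset_actM g h i : coset_act (g * h) i = coset_act h (coset_act g i).
Proof.
apply: coset_index_eq; set j := coset_act g i.
have := subgroupM sH (coset_indexP (h^-1 * tnth reps j))
                     (coset_indexP (g^-1 * tnth reps i)).
by rewrite invMg !mulgA mulgK.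
Qed.

Lemma coset_act1 i : coset_act 1 i = i.
Proof. by apply: coset_index_eq; rewrite invg1 mul1g mulVg; apply: subgroup1 sH. Qed.

Lemma coset_actK g : cancel (coset_act g) (coset_act g^-1).
Proof. by move=> i; rewrite -coset_actM mulgV coset_act1. Qed.

Definition coset_perm g : {perm 'I_n} := perm (can_inj (coset_actK g)).

Lemma coset_perm_morphism : monoid_morphism coset_perm.
Proof.
split=> [|g h]; apply/permP => i; rewrite ?permM !permE ?coset_act1 //.
exact: coset_actM.
Qed.

Lemma coset_perm_fix g : H g <-> coset_perm g (coset_index 1) = coset_index 1.
Proof.
set r := tnth reps (coset_index 1); rewrite permE.
have Hr' : H r^-1 by have := coset_indexP 1; rewrite mulg1.
have Hr : H r by rewrite -[r]invgK; apply: subgroupV sH Hr'.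
split=> [Hg | fix1].
  apply: coset_index_eq; rewrite mulgA.
  by apply: subgroupM sH _ Hr; apply: subgroupM sH Hr' (subgroupV sH Hg).
have := coset_indexP (g^-1 * r); rewrite [coset_index _]fix1 => Hrgr.
have := subgroupM sH (subgroupM sH Hr Hrgr) Hr'.
by rewrite mulVKg mulgK => /(subgroupV sH); rewrite invgK.
Qed.

End CosetAction.

Lemma finite_index_mpreim (G : groupType) (H : G -> Prop) : finite_index H ->
  exists (Q : finGroupType) (f : G -> Q) (K : {group Q}),
    [/\ monoid_morphism f, forall q, exists x, f x = q & H = mpreim f K].
Proof.
case=> sH [n [reps reps_cosets]].
have fM := coset_perm_morphism sH reps_cosets.
exists _, (corestr fM), (sgval @*^-1 'C[coset_index reps_cosets 1 | 'P])%G.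
split; [exact: corestr_morphism | exact: corestr_surj | rewrite mpreim_corestr].
apply: funext => g; apply: propext; rewrite (coset_perm_fix sH reps_cosets).
by rewrite /mpreim /= !inE sub1set inE; split=> /eqP.
Qed.

Theorem proposition5p6 (G : groupType) :
  let A := forall x : G, in_S x in
  let B := forall H : G -> Prop, finite_index H -> exponential H in
  let C := forall (Q : finGroupType) (f : G -> Q),
             monoid_morphism f -> (forall q : Q, exists g : G, f g = q) ->
             nilpotent [set: Q] in
  let D := forall H : G -> Prop, finite_index H -> subnormal_in H in
  (A <-> B) /\ (B <-> C) /\ (C <-> D).
Proof.
move=> A B C D.
have AB : A <-> B.
  split=> [inS H [sH [n iHn]] | expB x H n sH iHn].
    by split=> [|m iHm x]; [split; last exists n | exact: inS].
  by case: (expB H (conj sH (ex_intro _ n iHn))) => _; apply.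
have BC : B -> C.
  move=> expB Q f fM f_surj; apply: exponential_subgroups_nil => K _ q _.
  by apply: (mpreim_exponentialE f fM f_surj K).1; apply/expB/mpreim_finite_index.
have DC : D -> C.
  move=> snD Q f fM f_surj; apply: exponential_subgroups_nil => K _ q _.
  apply: expg_index_subnormal; last by rewrite inE.
  exact/(mpreim_subnormalE f fM f_surj)/snD/mpreim_finite_index.
have CB : C -> B.
  move=> nilC H /finite_index_mpreim[Q [f [K [fM f_surj ->]]]].
  apply/(mpreim_exponentialE f fM f_surj) => q.
  exact: nil_exponential_subgroups (nilC Q f fM f_surj) K (subsetT K) q (in_setT q).
have CD : C -> D.
  move=> nilC H /finite_index_mpreim[Q [f [K [fM f_surj ->]]]].
  apply/(mpreim_subnormalE f fM f_surj).
  exact: nilpotent_subnormal (nilC Q f fM f_surj) (subsetT K).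
tauto.
Qed.
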